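(* With $W=\mathrm{des}(\pi)$ and $W^\ast=\mathrm{des}(\pi^\ast)$ as constructed in the context, \[\mathrm{Var}\bigl(\mathbb{E}(W^\ast-W\mid\pi)\bigr)\le\frac{Cn^5}{n^2\bigl(n^2-\sum_a n_a^2\bigr)^2}\] for an absolute constant $C$ (independent of $h$, $n$ and the $n_a$). Here $\mathbb{E}(\cdot\mid\pi)$ averages over the auxiliary randomness $I,J,i^\ast,j^\ast$.
   Context: Let $h\ge 2$, let $n_1,\dots,n_h$ be positive integers, $n=n_1+\dots+n_h\ge 4$, and let $\pi$ be a uniformly distributed permutation of the multiset $\{1^{n_1},\dots,h^{n_h}\}$ (a sequence $(\pi(1),\dots,\pi(n))$ in which each $a$ occurs $n_a$ times, all such sequences equally likely). $\mathrm{des}(\pi)$ is the number of $i\in\{1,\dots,n-1\}$ with $\pi(i)>\pi(i+1)$. Construction of $\pi^\ast$: Let $I$ be uniformly distributed over $\{(1,2),(2,3),\dots,(n-1,n)\}$; let $J=(a,b)$, for $h\ge a>b\ge 1$, with probability $n_an_b/\sum_{c<d}n_cn_d$; $\pi,I,J$ are independent. Write $I=(i,j)$ with $j=i+1$. If $\pi(i)>\pi(j)$, set $\pi^\ast=\pi$. If $\pi(i)\le\pi(j)$ and $J=(a,b)$: choose $i^\ast$ uniformly from $\{k:\pi(k)=a\}$ and $j^\ast$ uniformly from $\{k:\pi(k)=b\}$, independently of each other and of all else. Then: (1) if $\{i,j\}\cap\{i^\ast,j^\ast\}=\emptyset$, or $i=i^\ast,j\ne j^\ast$, or $i\ne i^\ast,j=j^\ast$,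 obtain $\pi^\ast$ from $\pi$ by exchanging the entries at positions $i$ and $i^\ast$ and exchanging the entries at positions $j$ and $j^\ast$; (2) if $i=j^\ast$ and $j=i^\ast$, exchange the entries at positions $i$ and $j$; (3) if $i=j^\ast$, $j\ne i^\ast$, set $\pi^\ast(i)=\pi(i^\ast)$, $\pi^\ast(j)=\pi(i)$, $\pi^\ast(i^\ast)=\pi(j)$, and $\pi^\ast(k)=\pi(k)$ for $k\notin\{i,j,i^\ast\}$; (4) if $i\ne j^\ast$, $j=i^\ast$, set $\pi^\ast(i)=\pi(j)$, $\pi^\ast(j)=\pi(j^\ast)$, $\pi^\ast(j^\ast)=\pi(i)$, and $\pi^\ast(k)=\pi(k)$ for $k\notin\{i,j,j^\ast\}$. *)

(* Letters are natural numbers 1..h; sequences are seq nat,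
   positions are 0-based (position k of the paper is k.+1 here, irrelevant). *)
From HB Require Import structures.
From mathcomp Require Import all_boot all_order all_algebra.
Set Implicit Arguments. Unset Strict Implicit. Unset Printing Implicit Defensive.
Import Order.TTheory GRing.Theory Num.Theory.

Definition ntot (h : nat) (ns : nat -> nat) : nat := \sum_(1 <= a < h.+1) ns a.

Definition base (h : nat) (ns : nat -> nat) : seq nat :=
  flatten [seq nseq (ns a) a | a <- iota 1 h].

(* all permutations of the multiset (duplicate-free list) *)
Definition Omega (h : nat) (ns : nat -> nat) : seq (seq nat) :=
  permutations (base h ns).

Definition des (p : seq nat) : nat :=
  \sum_(i < (size p).-1) (nth 0 p i.+1 < nth 0 p i).

Definition positions (p : seq nat) (a : nat) : seq nat :=
  [seq k <- iota 0 (size p) | nth 0 p k == a].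

Definition swap (p : seq nat) (x y : nat) : seq nat :=
  set_nth 0 (set_nth 0 p x (nth 0 p y)) y (nth 0 p x).

(* pi^* built from pi, I = (i, i+1), i^*, j^* (cases of the construction) *)
Definition pstar (p : seq nat) (i ist jst : nat) : seq nat :=
  let j := i.+1 in
  if nth 0 p j < nth 0 p i then p
  else if (i == jst) && (j == ist) then swap p i j
  else if i == jst then
    set_nth 0 (set_nth 0 (set_nth 0 p i (nth 0 p ist)) j (nth 0 p i)) ist (nth 0 p j)
  else if j == ist then
    set_nth 0 (set_nth 0 (set_nth 0 p i (nth 0 p j)) j (nth 0 p jst)) jst (nth 0 p i)
  else swap (swap p i ist) j jst.

Local Open Scope ring_scope.

Definition Ssum (h : nat) (ns : nat -> nat) : nat :=
  (\sum_(1 <= d < h.+1) \sum_(1 <= c < d) ns c * ns d)%N.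

(* E(W^* - W | pi = p): average over I (uniform on the n-1 adjacent pairs),
   J = (a,b), a > b, with prob. n_a n_b / S, and i^*, j^* uniform on the
   positions of a and b respectively. *)
Definition condE (R : realFieldType) (h : nat) (ns : nat -> nat) (p : seq nat) : R :=
  let n := ntot h ns in
  \sum_(i < n.-1) (n.-1)%:R^-1 *
    \sum_(1 <= a < h.+1) \sum_(1 <= b < a)
      ((ns a * ns b)%:R / (Ssum h ns)%:R) *
      \sum_(ist <- positions p a) \sum_(jst <- positions p b)
        ((ns a)%:R^-1 * (ns b)%:R^-1) *
        ((des (pstar p i ist jst))%:R - (des p)%:R).

Definition meanOm (R : realFieldType) (h : nat) (ns : nat -> nat) (X : seq nat -> R) : R :=
  (size (Omega h ns))%:R^-1 * \sum_(p <- Omega h ns) X p.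

Definition varOm (R : realFieldType) (h : nat) (ns : nat -> nat) (X : seq nat -> R) : R :=
  meanOm h ns (fun p => (X p - meanOm h ns X) ^+ 2).

(* Up to the factor ((n-1) S)^-1, E(W^* - W | pi) is the sum T(pi) of the change
   of descents over the adjacent pair I and over all pairs of positions i^*, j^*
   such that the entry of pi at i^* exceeds the one at j^*.  That change only
   depends on the entries within distance 2 of i, i^* and j^*, so a
   transposition of pi alters O(n^2) of the n^3 summands, each by O(1): T is
   900 n^2-Lipschitz for transpositions.  For uniform permutations of a
   multiset of size n such a function has variance at most n (900 n^2)^2.
   Indeed, condition on the last letter: the class variances are bounded by
   induction, and two class means differ by at most the Lipschitz constant,
   since exchanging the last entry with an entry carrying the other letter
   couples the two classes.  Finally n^2 - sum_a n_a^2 = 2 S. *)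

From HB Require Import structures.
From mathcomp Require Import all_boot all_order all_algebra.
From mathcomp Require Import zify ring lra.
Import Order.TTheory GRing.Theory Num.Theory.

Set Implicit Arguments.
Unset Strict Implicit.
Unset Printing Implicit Defensive.

Lemma nth_swap (t : seq nat) u v w :
  nth 0 (swap t u v) w =
  if w == v then nth 0 t u else if w == u then nth 0 t v else nth 0 t w.
Proof. by rewrite /swap nth_set_nth /= nth_set_nth. Qed.

Lemma size_swap (t : seq nat) u v :
  u < size t -> v < size t -> size (swap t u v) = size t.
Proof. by move=> lt_u lt_v; rewrite /swap !size_set_nth; lia. Qed.

Lemma swapK (t : seq nat) u v :
  u < size t -> v < size t -> swap (swap t u v) u v = t.
Proof.
move=> lt_u lt_v; apply: (@eq_from_nth _ 0); first by rewrite !size_swap ?size_swap.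
move=> w _; rewrite !nth_swap.
have [->|_] := eqVneq w v; first by rewrite eqxx; case: eqVneq => [->|].
by rewrite eqxx; case: eqVneq => [->|].
Qed.

Lemma swap_rcons (t : seq nat) c u v :
  u < size t -> v < size t -> swap (rcons t c) u v = rcons (swap t u v) c.
Proof.
move=> lt_u lt_v; apply: (@eq_from_nth _ 0).
  by rewrite size_swap ?size_rcons ?size_swap //; lia.
move=> w _; rewrite nth_swap !nth_rcons size_swap // nth_swap.
by have [->|_] := eqVneq w v; [rewrite lt_v lt_u | case: eqVneq => [->|]; rewrite ?lt_u ?lt_v].
Qed.

Lemma perm_swap (t : seq nat) u v :
  u < size t -> v < size t -> perm_eq (swap t u v) t.
Proof.
move=> lt_u lt_v; apply/permP => a.
have count_nth w : w < size t -> a (nth 0 t w) <= count a t.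
  move=> lt_w; rewrite -(cat_take_drop w t) count_cat (drop_nth 0 lt_w) /=.
  by rewrite nth_cat size_take lt_w ltnn subnn /=; lia.
have lt_v' : v < size (set_nth 0 t u (nth 0 t v)) by rewrite size_set_nth; lia.
rewrite /swap (count_set_nth_ltn _ _ _ lt_v') count_set_nth_ltn // nth_set_nth /= if_same.
by rewrite subnK ?addnK // (leq_trans (count_nth u lt_u)) ?leq_addr.
Qed.

Lemma size_mem_permutations (T : eqType) (s t : seq T) :
  t \in permutations s -> size t = size s.
Proof. by rewrite mem_permutations => /perm_size. Qed.

Lemma count_mem_nth (t : seq nat) d :
  count_mem d t = \sum_(m < size t) (nth 0 t m == d).
Proof. by elim: t => [|x t IH]; rewrite ?big_ord0 // big_ord_recl /= IH. Qed.

Definition perms_at (s : seq nat) (n c : nat) :=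
  [seq t <- permutations s | nth 0 t n == c].

Lemma perms_at_last (s : seq nat) n c : size s = n.+1 -> c \in s ->
  perm_eq (perms_at s n c) (map (rcons^~ c) (permutations (rem c s))).
Proof.
move=> size_s sc; apply: uniq_perm.
- by rewrite filter_uniq // permutations_uniq.
- by rewrite map_inj_uniq ?permutations_uniq // => t1 t2 /rcons_inj [].
move=> t; rewrite mem_filter; apply/andP/mapP => [[/eqP tn st]|[q]].
  have size_t := size_mem_permutations st.
  have tE : t = rcons (take n t) c.
    by rewrite -tn -take_nth ?take_oversize // size_t size_s.
  exists (take n t) => //; rewrite mem_permutations -(perm_cons c).
  by apply: (perm_trans _ (perm_to_rem sc)); rewrite -perm_rcons -tE -mem_permutations.
rewrite mem_permutations => qs ->.
have size_q : size q = n by rewrite (perm_size qs) size_rem // size_s.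
rewrite nth_rcons size_q ltnn eqxx; split => //.
rewrite mem_permutations perm_rcons perm_sym (perm_trans (perm_to_rem sc)) //.
by rewrite perm_cons perm_sym.
Qed.

Definition near (a b : nat) : bool := (a <= b.+2) && (b <= a.+2).

(* [touched i x y] are the positions [pstar _ i x y] may change; the change in
   descents only reads entries [near] one of [i], [x], [y]. *)
Definition touched (i x y z : nat) : bool :=
  [|| z == i, z == i.+1, z == x | z == y].

Definition window (i x y z : nat) : bool := [|| near i z, near x z | near y z].

Lemma nearC : symmetric near.
Proof. by move=> a b; rewrite /near andbC. Qed.

Lemma sum_near_le u N : \sum_(k < N) near k u <= 5.
Proof.
suff -> : \sum_(k < N) near k u = minn N u.+3 - (u - 2) by lia.
elim: N => [|N IH]; first by rewrite big_ord0.
by rewrite big_ord_recr /= IH /near; case: (leqP u N.+2); case: (leqP N u.+2) => /=; lia.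
Qed.

Lemma touched_window i x y t :
  touched i x y t || touched i x y t.+1 -> window i x y t && window i x y t.+1.
Proof. by rewrite /touched /window /near; lia. Qed.

Lemma nth_pstar_untouched (p : seq nat) i x y z :
  ~~ touched i x y z -> nth 0 (pstar p i x y) z = nth 0 p z.
Proof.
rewrite /touched !negb_or => /and4P [/negbTE zi /negbTE zj /negbTE zx /negbTE zy].
rewrite /pstar; do 4?case: ifP => _;
  by repeat rewrite (nth_swap, nth_set_nth) /= ?zi ?zj ?zx ?zy.
Qed.

Lemma nth_pstar_local (p p' : seq nat) i x y z :
  (forall w, touched i x y w || (w == z) -> nth 0 p w = nth 0 p' w) ->
  nth 0 (pstar p i x y) z = nth 0 (pstar p' i x y) z.
Proof.
move=> eq_pp'.
have [ei ej ex ey ez] : [/\ nth 0 p i = nth 0 p' i, nth 0 p i.+1 = nth 0 p' i.+1,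
    nth 0 p x = nth 0 p' x, nth 0 p y = nth 0 p' y & nth 0 p z = nth 0 p' z].
  by split; apply: eq_pp'; rewrite /touched !eqxx ?orbT.
rewrite /pstar ei ej; do 4?case: ifP => _;
  by rewrite ?ez; repeat rewrite (nth_swap, nth_set_nth) /= ?ei ?ej ?ex ?ey ?ez.
Qed.

Lemma size_pstar (p : seq nat) i x y :
  i.+1 < size p -> x < size p -> y < size p -> size (pstar p i x y) = size p.
Proof.
by move=> lt_i lt_x lt_y; rewrite /pstar /swap; do 4?case: ifP => _; rewrite ?size_set_nth; lia.
Qed.

Lemma sum_triple_le (g : nat -> nat) K n1 n : n1 <= n ->
  (forall N, \sum_(k < N) g k <= K) ->
  \sum_(i < n1) \sum_(x < n) \sum_(y < n) (g i + g x + g y) <= 3 * K * n ^ 2.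
Proof.
move=> le_n1 sum_g; set G := \sum_(y < n) g y.
have sum_xy i : \sum_(x < n) \sum_(y < n) (g i + g x + g y) = n * n * g i + 2 * n * G.
  under eq_bigr => x _ do rewrite big_split /= sum_nat_const card_ord.
  rewrite big_split /= sum_nat_const card_ord -big_distrr /= big_split /=.
  by rewrite sum_nat_const card_ord -/G; ring.
under eq_bigr => i _ do rewrite sum_xy.
rewrite big_split /= -big_distrr /= sum_nat_const card_ord.
have -> : 3 * K * n ^ 2 = n * n * K + n * (2 * n * K) by ring.
by rewrite leq_add ?leq_mul ?leq_mul2l ?sum_g ?orbT.
Qed.

Lemma size_base h ns : size (base h ns) = ntot h ns.
Proof.
rewrite /base size_flatten /shape -map_comp sumnE big_map /ntot /index_iota subSS subn0.
by apply: eq_bigr => a _; rewrite /= size_nseq.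
Qed.

Lemma mem_base h ns z : z \in base h ns -> 1 <= z <= h.
Proof.
by case/flatten_mapP => a; rewrite mem_iota mem_nseq => ? /andP [_ /eqP ->]; lia.
Qed.

Lemma mem_Omega h ns p : p \in Omega h ns ->
  size p = ntot h ns /\ (forall x, x < size p -> 1 <= nth 0 p x <= h).
Proof.
move=> pO; have size_p : size p = ntot h ns by rewrite (size_mem_permutations pO) size_base.
split=> // x lt_x; apply: (@mem_base h ns).
by move: pO; rewrite mem_permutations => /perm_mem <-; rewrite mem_nth.
Qed.

Lemma sqr_ntot h ns : ntot h ns ^ 2 = \sum_(1 <= a < h.+1) ns a ^ 2 + 2 * Ssum h ns.
Proof.
elim: h => [|h IH]; first by rewrite /ntot /Ssum !big_geq.
have ntotS : ntot h.+1 ns = ntot h ns + ns h.+1 by rewrite /ntot big_nat_recr.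
have SsumS : Ssum h.+1 ns = Ssum h ns + ntot h ns * ns h.+1.
  by rewrite /Ssum big_nat_recr //= /ntot big_distrl.
by rewrite ntotS SsumS big_nat_recr //= sqrnD IH; lia.
Qed.

Lemma Ssum_gt0 h ns : 2 <= h -> (forall a, 1 <= a <= h -> 0 < ns a) -> 0 < Ssum h ns.
Proof.
move=> h_ge2 ns_gt0; rewrite /Ssum (bigD1_seq 2) ?iota_uniq ?mem_index_iota //=.
by rewrite big_nat1 ltn_addr // muln_gt0 !ns_gt0 //; lia.
Qed.

Local Open Scope ring_scope.

Lemma sumr_const_seq (V : nmodType) (T : Type) (r : seq T) (x : V) :
  \sum_(t <- r) x = x *+ size r.
Proof. by rewrite big_const_seq count_predT iter_addr_0. Qed.

Section Moments.

Variables (R : realFieldType) (T : eqType).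
Implicit Types (L : seq T) (X Y : T -> R).

Definition mean L X : R := (size L)%:R^-1 * \sum_(t <- L) X t.

Definition var L X : R := mean L (fun t => (X t - mean L X) ^+ 2).

Lemma var_seq1 t X : var [:: t] X = 0.
Proof. by rewrite /var /mean /= !big_seq1 invr1 !mul1r subrr expr0n. Qed.

Lemma eq_in_var L X Y : {in L, X =1 Y} -> var L X = var L Y.
Proof.
move=> eqXY; have eq_mean : mean L X = mean L Y by rewrite /mean (eq_big_seq _ eqXY).
by rewrite /var eq_mean /mean; congr (_ * _); apply: eq_big_seq => t /eqXY ->.
Qed.

Lemma perm_var L1 L2 X : perm_eq L1 L2 -> var L1 X = var L2 X.
Proof. by move=> pL; rewrite /var /mean (perm_size pL) !(perm_big _ pL). Qed.

Lemma varZ L X k : var L (fun t => k * X t) = k ^+ 2 * var L X.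
Proof.
have meanZ : mean L (fun t => k * X t) = k * mean L X.
  by rewrite /mean -big_distrr /= mulrCA.
rewrite /var meanZ {1}/mean.
under eq_bigr => t _ do rewrite -mulrBr exprMn.
by rewrite -big_distrr /= mulrCA.
Qed.

Lemma mean_cst L k : (0 < size L)%N -> mean L (fun=> k) = k.
Proof.
move=> L_gt0; rewrite /mean sumr_const_seq -[k *+ _]mulr_natl mulrA mulVf ?mul1r //.
by rewrite pnatr_eq0 -lt0n.
Qed.

Lemma sum_sqr_dev L X c : (0 < size L)%N ->
  \sum_(t <- L) (X t - c) ^+ 2 =
  (size L)%:R * var L X + (size L)%:R * (mean L X - c) ^+ 2.
Proof.
move=> L_gt0; set N := (size L)%:R; set mu := mean L X.
have N_neq0 : N != 0 by rewrite pnatr_eq0 -lt0n.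
have NmeanE Y : N * mean L Y = \sum_(t <- L) Y t by rewrite mulrA divff // mul1r.
rewrite [var L X]/var -/mu.
transitivity (\sum_(t <- L) ((X t - mu) ^+ 2 + 2 * (mu - c) * (X t - mu) + (mu - c) ^+ 2)).
  by apply: eq_bigr => t _; ring.
by rewrite !big_split /= -big_distrr /= sumrB -!NmeanE !mean_cst // -/mu; ring.
Qed.

End Moments.

Lemma var_map (R : realFieldType) (T T' : eqType) (f : T' -> T) (L : seq T')
    (X : T -> R) :
  var (map f L) X = var L (X \o f).
Proof. by rewrite /var /mean size_map !big_map. Qed.

Section Partition.

Variables (R : realFieldType) (T I : eqType).
Variables (L : seq T) (J : seq I) (part : I -> seq T).
Hypothesis sum_part : forall Y : T -> R,
  \sum_(t <- L) Y t = \sum_(i <- J) \sum_(t <- part i) Y t.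
Hypothesis part_gt0 : forall i, i \in J -> (0 < size (part i))%N.
Implicit Type X : T -> R.

Let weight i : R := (size (part i))%:R.

Let size_partE : (size L)%:R = \sum_(i <- J) weight i.
Proof.
have := sum_part (fun=> 1); rewrite sumr_const_seq => ->.
by apply: eq_bigr => i _; rewrite sumr_const_seq.
Qed.

Let sum_partE X : \sum_(t <- L) X t = \sum_(i <- J) weight i * mean (part i) X.
Proof.
rewrite sum_part; apply: eq_big_seq => i Ji.
by rewrite mulrA mulfV ?mul1r // pnatr_eq0 -lt0n part_gt0.
Qed.

Lemma dist_mean_part X M :
  (forall i j, i \in J -> j \in J -> `|mean (part i) X - mean (part j) X| <= M) ->
  forall i, i \in J -> `|mean (part i) X - mean L X| <= M.
Proof.
move=> close i Ji; set N := (size L)%:R : R.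
have N_gt0 : 0 < N.
  rewrite lt0r ler0n andbT /N size_partE psumr_neq0 => [|j _]; last exact: ler0n.
  by apply/hasP; exists i => //; rewrite ltr0n part_gt0.
have -> : mean (part i) X - mean L X =
    N^-1 * \sum_(j <- J) weight j * (mean (part i) X - mean (part j) X).
  under eq_bigr => j _ do rewrite mulrBr.
  rewrite sumrB -mulr_suml -size_partE -/N {2}/mean -/N sum_partE.
  by field; rewrite gt_eqF.
rewrite normrM gtr0_norm ?invr_gt0 // ler_pdivrMl // /N size_partE mulr_suml.
apply: le_trans (ler_norm_sum _ _ _) _; rewrite !big_seq; apply: ler_sum => j Jj.
by rewrite normrM ger0_norm ?ler0n // ler_wpM2l ?ler0n ?close.
Qed.

Lemma var_part_le X V M : (0 < size L)%N ->
  (forall i, i \in J -> var (part i) X <= V) ->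
  (forall i, i \in J -> `|mean (part i) X - mean L X| <= M) ->
  var L X <= V + M ^+ 2.
Proof.
move=> L_gt0 varV meanM; set N := (size L)%:R : R.
have N_gt0 : 0 < N by rewrite ltr0n.
rewrite /var {1}/mean -/N sum_part ler_pdivrMl // /N size_partE mulr_suml.
rewrite !big_seq; apply: ler_sum => i Ji; rewrite sum_sqr_dev ?part_gt0 // -mulrDr.
rewrite ler_wpM2l ?ler0n // lerD ?varV // -real_normK ?num_real //.
by rewrite lerXn2r ?nnegrE ?(le_trans _ (meanM i Ji)) ?meanM.
Qed.

End Partition.

Definition swap_lipschitz (R : numDomainType) (s : seq nat) (F : seq nat -> R) (M : R) :=
  forall t u v, t \in permutations s -> (u < size s)%N -> (v < size s)%N ->
  `|F (swap t u v) - F t| <= M.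

Section PermsAt.

Variables (R : realFieldType) (s : seq nat) (n : nat).
Hypothesis lt_n : (n < size s)%N.
Implicit Types (G F : seq nat -> R) (c d : nat).

Let perms_atP c t : t \in perms_at s n c = (t \in permutations s) && (nth 0 t n == c).
Proof. by rewrite mem_filter andbC. Qed.

Lemma size_perms_at_gt0 c : c \in s -> (0 < size (perms_at s n c))%N.
Proof.
move=> sc; have : swap s (index c s) n \in perms_at s n c.
  by rewrite perms_atP nth_swap eqxx nth_index // eqxx mem_permutations perm_swap ?index_mem.
by case: (perms_at s n c).
Qed.

Lemma sum_perms_at G :
  \sum_(t <- permutations s) G t = \sum_(c <- undup s) \sum_(t <- perms_at s n c) G t.
Proof.
transitivity (\sum_(c <- undup s) \sum_(t <- permutations s)
                (if nth 0 t n == c then G t else 0)); last first.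
  by apply: eq_bigr => c _; rewrite big_filter [RHS]big_mkcond.
rewrite exchange_big /=; apply: eq_big_seq => t st.
rewrite -big_mkcond /= big_const_seq iter_addr_0.
suff -> : count (eq_op (nth 0 t n)) (undup s) = 1%N by rewrite mulr1n.
rewrite (eq_count (a2 := pred1 (nth 0 t n))) => [|c]; last by rewrite /= eq_sym.
rewrite count_uniq_mem ?undup_uniq // mem_undup.
move: (st); rewrite mem_permutations => /perm_mem <-.
by rewrite mem_nth // (size_mem_permutations st).
Qed.

Lemma sum_count_perms_at c d G :
  \sum_(t <- perms_at s n c) \sum_(m < size s) (nth 0 t m == d)%:R * G t =
  (count_mem d s)%:R * \sum_(t <- perms_at s n c) G t.
Proof.
rewrite big_distrr; apply: eq_big_seq => t; rewrite perms_atP => /andP [st _].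
rewrite -big_distrl /= -natr_sum -(size_mem_permutations st) -count_mem_nth.
by move: st; rewrite mem_permutations => /permP ->.
Qed.

(* Exchanging positions m and n is a bijection between the permutations with
   (c at n, d at m) and those with (d at n, c at m). *)
Lemma sum_perms_at_swap c d m G : c != d -> (m < size s)%N ->
  \sum_(t <- perms_at s n c) (nth 0 t m == d)%:R * G (swap t m n) =
  \sum_(t <- perms_at s n d) (nth 0 t m == c)%:R * G t.
Proof.
move=> neq_cd lt_m.
have [->|neq_mn] := eqVneq m n.
  rewrite !big1_seq // => t; rewrite /= perms_atP => /andP [_ /eqP ->];
  by rewrite ?(eq_sym d) (negbTE neq_cd) mul0r.
have sum_ind (P : pred (seq nat)) (Y : seq nat -> R) r :
    \sum_(t <- r) (P t)%:R * Y t = \sum_(t <- r | P t) Y t.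
  by rewrite [RHS]big_mkcond; apply: eq_bigr => t _; rewrite mulr_natl mulrb.
have swap_perms t : t \in permutations s -> swap t m n \in permutations s.
  move=> st; have size_t := size_mem_permutations st.
  rewrite mem_permutations (perm_trans (perm_swap _ _)) ?size_t //.
  by rewrite -mem_permutations.
rewrite !sum_ind -big_filter -[RHS]big_filter -(big_map (fun t => swap t m n) predT G).
apply/perm_big/uniq_perm; rewrite ?filter_uniq ?permutations_uniq //.
  rewrite map_inj_in_uniq ?filter_uniq ?permutations_uniq // => t1 t2.
  rewrite !mem_filter => /and3P [_ _ st1] /and3P [_ _ st2] eq_swap.
  have size1 := size_mem_permutations st1; have size2 := size_mem_permutations st2.
  by rewrite -[t1](swapK (u := m) (v := n)) ?size1 // eq_swap swapK ?size2.
move=> t; apply/mapP/idP => [[t0]|].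
  rewrite !mem_filter => /and3P [/eqP t0m /eqP t0n st0] ->.
  by rewrite !nth_swap eqxx (negbTE neq_mn) eqxx t0m t0n !eqxx swap_perms.
rewrite !mem_filter => /and3P [/eqP tm /eqP tn st].
have size_t := size_mem_permutations st.
exists (swap t m n); last by rewrite swapK ?size_t.
by rewrite !mem_filter !nth_swap eqxx (negbTE neq_mn) eqxx tm tn !eqxx swap_perms.
Qed.


Lemma sum_count_perms_at_swap c d G : c != d ->
  \sum_(t <- perms_at s n c) \sum_(m < size s) (nth 0 t m == d)%:R * G (swap t m n) =
  (count_mem c s)%:R * \sum_(t <- perms_at s n d) G t.
Proof.
move=> neq_cd; rewrite exchange_big /=.
under eq_bigr => m _ do rewrite (sum_perms_at_swap _ neq_cd (ltn_ord m)).
by rewrite exchange_big sum_count_perms_at.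
Qed.

(* Coupling the two classes through [sum_count_perms_at_swap]: both means are
   averages over the same pairs (t, m), once of [F t], once of [F (swap t m n)]. *)
Lemma dist_mean_perms_at F M c d : c \in s -> d \in s -> swap_lipschitz s F M ->
  `|mean (perms_at s n c) F - mean (perms_at s n d) F| <= M.
Proof.
move=> sc sd lipF.
have [<-|neq_cd] := eqVneq c d.
  by rewrite subrr normr0 (le_trans _ (lipF s n n _ lt_n lt_n)) ?mem_permutations.
set Nc := (size (perms_at s n c))%:R : R; set Nd := (size (perms_at s n d))%:R : R.
set kc := (count_mem c s)%:R : R; set kd := (count_mem d s)%:R : R.
have Nc_gt0 : 0 < Nc by rewrite ltr0n size_perms_at_gt0.
have kc_gt0 : 0 < kc by rewrite ltr0n -has_count has_pred1.
have kd_gt0 : 0 < kd by rewrite ltr0n -has_count has_pred1.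
have kd_Nc : kd * Nc = kc * Nd.
  have := sum_count_perms_at_swap (fun=> 1) neq_cd.
  by rewrite sum_count_perms_at !sumr_const_seq.
set D := \sum_(t <- perms_at s n c) \sum_(m < size s)
           (nth 0 t m == d)%:R * (F t - F (swap t m n)).
have DE : D = kd * \sum_(t <- perms_at s n c) F t - kc * \sum_(t <- perms_at s n d) F t.
  rewrite -sum_count_perms_at -(sum_count_perms_at_swap F neq_cd) -sumrB.
  by apply: eq_bigr => t _; rewrite -sumrB; apply: eq_bigr => m _; rewrite mulrBr.
have -> : mean (perms_at s n c) F - mean (perms_at s n d) F = (kd * Nc)^-1 * D.
  rewrite DE /mean -/Nc -/Nd.
  have -> : Nd = kd * Nc / kc by rewrite kd_Nc mulrC mulKf // gt_eqF.
  by field; rewrite !gt_eqF.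
rewrite normrM gtr0_norm ?invr_gt0 ?mulr_gt0 // ler_pdivrMl ?mulr_gt0 //.
have -> : kd * Nc * M = \sum_(t <- perms_at s n c) \sum_(m < size s) (nth 0 t m == d)%:R * M.
  by rewrite sum_count_perms_at sumr_const_seq -[M *+ _]mulr_natl mulrA.
apply: le_trans (ler_norm_sum _ _ _) _; rewrite !big_seq; apply: ler_sum => t.
rewrite perms_atP => /andP [st _]; apply: le_trans (ler_norm_sum _ _ _) _.
apply: ler_sum => m _; rewrite normrM ger0_norm ?ler0n // ler_wpM2l ?ler0n //.
by rewrite distrC lipF.
Qed.

End PermsAt.

Lemma swap_lipschitz_rem (R : numDomainType) (s : seq nat) c (F : seq nat -> R) M :
  c \in s -> swap_lipschitz s F M -> swap_lipschitz (rem c s) (F \o rcons^~ c) M.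
Proof.
move=> sc lipF q u v qs lt_u_rem lt_v_rem; have size_q := size_mem_permutations qs.
have size_s : size s = (size (rem c s)).+1 by rewrite size_rem // prednK //; case: (s) sc.
have [lt_u lt_v] : (u < size s)%N /\ (v < size s)%N by rewrite size_s; split; apply: leqW.
rewrite /= -swap_rcons ?size_q // lipF //.
rewrite mem_permutations perm_rcons perm_sym (perm_trans (perm_to_rem sc)) //.
by rewrite perm_cons perm_sym -mem_permutations.
Qed.

Lemma var_permutations_le (R : realFieldType) (s : seq nat) (F : seq nat -> R) M :
  swap_lipschitz s F M -> var (permutations s) F <= (size s)%:R * M ^+ 2.
Proof.
move sE : (size s) => n; elim: n s sE F => [|n IH] s size_s F lipF.
  by move/size0nil: size_s => ->; rewrite var_seq1 mul0r.
have lt_n : (n < size s)%N by rewrite size_s.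
rewrite -nat1r mulrDl mul1r addrC.
apply: (var_part_le (sum_perms_at lt_n)).
- by move=> c; rewrite mem_undup; apply: size_perms_at_gt0.
- have : s \in permutations s by rewrite mem_permutations.
  by case: (permutations s).
- move=> c; rewrite mem_undup => sc; rewrite (perm_var _ (perms_at_last size_s sc)) var_map.
  by apply: IH (swap_lipschitz_rem sc lipF); rewrite size_rem ?size_s.
- apply: (dist_mean_part (sum_perms_at lt_n)) => [c'|c' d]; rewrite !mem_undup.
    exact: size_perms_at_gt0.
  by move=> sc sd; apply: dist_mean_perms_at.
Qed.

Lemma natr_desB (R : pzRingType) (q p : seq nat) : size q = size p ->
  (des q)%:R - (des p)%:R = \sum_(t < (size p).-1)
    (((nth 0 q t.+1 < nth 0 q t)%N)%:R - ((nth 0 p t.+1 < nth 0 p t)%N)%:R : R).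
Proof. by move=> eq_size; rewrite /des eq_size !natr_sum -sumrB. Qed.

Definition des_change (R : pzRingType) (p : seq nat) i x y : R :=
  (des (pstar p i x y))%:R - (des p)%:R.

Section DesChange.

Variable R : numDomainType.
Variables (p : seq nat) (i x y : nat).
Hypotheses (lt_i : (i.+1 < size p)%N) (lt_x : (x < size p)%N) (lt_y : (y < size p)%N).

Lemma des_change_local (p' : seq nat) : size p' = size p ->
  (forall w, window i x y w -> nth 0 p' w = nth 0 p w) ->
  des_change R p' i x y = des_change R p i x y.
Proof.
move=> eq_size eq_window.
rewrite /des_change !natr_desB ?size_pstar ?eq_size //; apply: eq_bigr => t _.
have [/touched_window/andP [wt wt1]|] := boolP (touched i x y t || touched i x y t.+1).
  have eq_pstar z : window i x y z -> nth 0 (pstar p' i x y) z = nth 0 (pstar p i x y) z.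
    move=> wz; apply: nth_pstar_local => w /orP [tw|/eqP -> //]; last exact: eq_window.
    by apply: eq_window; move: tw; rewrite /touched /window /near; lia.
  by rewrite !eq_pstar ?eq_window.
by rewrite negb_or => /andP [nt nt1]; rewrite !nth_pstar_untouched // !subrr.
Qed.

Lemma des_change_bound : `|des_change R p i x y| <= 15.
Proof.
rewrite /des_change natr_desB ?size_pstar //; apply: le_trans (ler_norm_sum _ _ _) _.
apply: (@le_trans _ _ (\sum_(t < (size p).-1) (window i x y t)%:R)).
  apply: ler_sum => t _.
  have [/touched_window/andP [-> _]|] := boolP (touched i x y t || touched i x y t.+1).
    by do 2!case: (_ < _)%N; rewrite ?subrr ?normr0 ?subr0 ?sub0r ?normrN ?normr1.
  by rewrite negb_or => /andP [nt nt1]; rewrite !nth_pstar_untouched // subrr normr0 ler0n.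
rewrite -natr_sum ler_nat.
apply: (@leq_trans (\sum_(t < (size p).-1) (near t i + near t x + near t y))).
  by apply: leq_sum => t _; rewrite /window !(nearC _ t); do 3!case: near.
by rewrite !big_split /= -[15%N]/(5 + 5 + 5)%N !leq_add ?sum_near_le.
Qed.

End DesChange.

(* Averaging over [J] and [i^*, j^*] in [condE] amounts to summing over all
   positions [x = i^*], [y = j^*] with [p x > p y]: see [condE_total_change]. *)
Definition weighted_change (R : pzRingType) (p : seq nat) i x y : R :=
  ((nth 0 p y < nth 0 p x)%N)%:R * des_change R p i x y.

Definition total_change (R : pzRingType) (p : seq nat) : R :=
  \sum_(i < (size p).-1) \sum_(x < size p) \sum_(y < size p) weighted_change R p i x y.

Lemma weighted_change_bound (R : numDomainType) (p : seq nat) i x y :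
  (i.+1 < size p)%N -> (x < size p)%N -> (y < size p)%N ->
  `|weighted_change R p i x y| <= 15.
Proof.
move=> lt_i lt_x lt_y; rewrite normrM (le_trans _ (des_change_bound R lt_i lt_x lt_y)) //.
by rewrite ler_piMl ?normr_ge0 //; case: (_ < _)%N; rewrite ?normr1 ?normr0.
Qed.

Section WeightedChange.

Variable R : numDomainType.
Variables (p : seq nat) (i x y : nat).
Hypotheses (lt_i : (i.+1 < size p)%N) (lt_x : (x < size p)%N) (lt_y : (y < size p)%N).

Lemma weighted_change_swap u v : (u < size p)%N -> (v < size p)%N ->
  `|weighted_change R (swap p u v) i x y - weighted_change R p i x y| <=
  30 * (window i x y u || window i x y v)%:R.
Proof.
move=> lt_u lt_v; have size_swap_p := size_swap lt_u lt_v.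
have [_|] := boolP (window i x y u || window i x y v).
  rewrite mulr1 (le_trans (ler_normB _ _)) // -[30]/((15 + 15)%N%:R : R) natrD.
  by rewrite lerD // weighted_change_bound ?size_swap_p.
move=> /norP [nu nv].
have eq_window w : window i x y w -> nth 0 (swap p u v) w = nth 0 p w.
  move=> ww; rewrite nth_swap; case: eqVneq => [wv|_]; first by rewrite -wv ww in nv.
  by case: eqVneq => [wu|//]; rewrite -wu ww in nu.
rewrite /weighted_change (des_change_local R lt_i lt_x lt_y size_swap_p eq_window).
by rewrite !eq_window ?subrr ?normr0 ?mulr0 // /window /near; lia.
Qed.

End WeightedChange.

Lemma total_change_swap (R : numDomainType) (p : seq nat) u v :
  (u < size p)%N -> (v < size p)%N ->
  `|total_change R (swap p u v) - total_change R p| <= 900 * (size p)%:R ^+ 2.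
Proof.
move=> lt_u lt_v; rewrite /total_change size_swap //; set n := size p.
set g := fun k => (near k u + near k v)%N.
rewrite -sumrB; under eq_bigr => i _ do rewrite -sumrB.
under eq_bigr => i _ do under eq_bigr => x _ do rewrite -sumrB.
apply: (@le_trans _ _ (30 * (\sum_(i < n.-1) \sum_(x < n) \sum_(y < n) (g i + g x + g y))%:R)).
  rewrite natr_sum mulr_sumr; apply: le_trans (ler_norm_sum _ _ _) _; apply: ler_sum => i _.
  rewrite natr_sum mulr_sumr; apply: le_trans (ler_norm_sum _ _ _) _; apply: ler_sum => x _.
  rewrite natr_sum mulr_sumr; apply: le_trans (ler_norm_sum _ _ _) _; apply: ler_sum => y _.
  have lt_i : (i.+1 < n)%N by have := ltn_ord i; rewrite /n; lia.
  apply: le_trans (weighted_change_swap R lt_i (ltn_ord x) (ltn_ord y) lt_u lt_v) _.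
  rewrite ler_wpM2l // ler_nat /g /window !(nearC _ u) !(nearC _ v).
  by do 6!case: near.
have sum_g N : (\sum_(k < N) g k <= 10)%N.
  by rewrite big_split /= -[10%N]/(5 + 5)%N leq_add ?sum_near_le.
rewrite (_ : 900 * _ = 30 * (3 * 10 * n ^ 2)%N%:R); last by rewrite natrM natrX; ring.
by rewrite ler_wpM2l // ler_nat sum_triple_le ?leq_pred.
Qed.

Lemma sum_positions (R : pzSemiRingType) (p : seq nat) a (G : nat -> R) :
  \sum_(k <- positions p a) G k = \sum_(k < size p) (nth 0 p k == a)%:R * G k.
Proof.
rewrite big_filter big_mkcond /= -{1}(subn0 (size p)) big_mkord.
by apply: eq_bigr => k _; case: eqP; rewrite ?mul1r ?mul0r.
Qed.

Lemma sum_nat_eq (R : pzSemiRingType) m n c (G : nat -> R) :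
  \sum_(m <= a < n) (c == a)%:R * G a = if (m <= c < n)%N then G c else 0.
Proof.
rewrite -(@big_nat1_eq R 0 +%R) big_mkcond /=; apply: eq_bigr => a _.
by rewrite eq_sym; case: eqP; rewrite ?mul1r ?mul0r.
Qed.

Lemma sum_letter_pairs (R : pzSemiRingType) h c d (D : R) :
  (1 <= c <= h)%N -> (0 < d)%N ->
  \sum_(1 <= a < h.+1) \sum_(1 <= b < a) (c == a)%:R * ((d == b)%:R * D) =
  ((d < c)%N)%:R * D.
Proof.
move=> c_in d_gt0; under eq_bigr => a _ do rewrite -mulr_sumr sum_nat_eq.
by rewrite sum_nat_eq ltnS c_in d_gt0; case: (d < c)%N; rewrite ?mul1r ?mul0r.
Qed.

Lemma exchange_big4 (R : pzSemiRingType) (A : seq nat) (B : nat -> seq nat) n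
    (F : nat -> nat -> 'I_n -> 'I_n -> R) :
  \sum_(a <- A) \sum_(b <- B a) \sum_(x < n) \sum_(y < n) F a b x y =
  \sum_(x < n) \sum_(y < n) \sum_(a <- A) \sum_(b <- B a) F a b x y.
Proof.
transitivity (\sum_(a <- A) \sum_(x < n) \sum_(y < n) \sum_(b <- B a) F a b x y).
  by apply: eq_bigr => a _; rewrite exchange_big; apply: eq_bigr => x _; rewrite exchange_big.
by rewrite exchange_big; apply: eq_bigr => x _; rewrite exchange_big.
Qed.

Lemma condE_total_change (R : realFieldType) h ns (p : seq nat) :
  (forall a, (1 <= a <= h)%N -> (0 < ns a)%N) -> (0 < Ssum h ns)%N ->
  size p = ntot h ns -> (forall x, (x < size p)%N -> (1 <= nth 0 p x <= h)%N) ->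
  condE R h ns p = ((ntot h ns).-1%:R * (Ssum h ns)%:R)^-1 * total_change R p.
Proof.
move=> ns_gt0 S_gt0 size_p p_letters.
rewrite /condE /total_change size_p invfM mulr_sumr; apply: eq_bigr => i _.
rewrite -mulrA; congr (_ * _); set D := des_change R p i.
have pair_sum a b : (1 <= b)%N -> (b < a <= h)%N ->
  (ns a * ns b)%:R / (Ssum h ns)%:R *
    \sum_(ist <- positions p a) \sum_(jst <- positions p b)
      ((ns a)%:R^-1 * (ns b)%:R^-1) * D ist jst =
  (Ssum h ns)%:R^-1 * \sum_(x < ntot h ns) \sum_(y < ntot h ns)
      (nth 0 p x == a)%:R * ((nth 0 p y == b)%:R * D x y).
  move=> b_gt0 /andP [lt_ba le_ah].
  have na_neq0 : (ns a)%:R != 0 :> R by rewrite pnatr_eq0 -lt0n ns_gt0 //; lia.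
  have nb_neq0 : (ns b)%:R != 0 :> R by rewrite pnatr_eq0 -lt0n ns_gt0 //; lia.
  have S_neq0 : (Ssum h ns)%:R != 0 :> R by rewrite pnatr_eq0 -lt0n.
  rewrite sum_positions size_p !mulr_sumr; apply: eq_bigr => x _.
  rewrite sum_positions size_p !mulr_sumr; apply: eq_bigr => y _.
  by rewrite natrM; field; rewrite na_neq0 nb_neq0 S_neq0.
transitivity ((Ssum h ns)%:R^-1 * \sum_(1 <= a < h.+1) \sum_(1 <= b < a)
   \sum_(x < ntot h ns) \sum_(y < ntot h ns)
     (nth 0 p x == a)%:R * ((nth 0 p y == b)%:R * D x y)).
  rewrite mulr_sumr; apply: eq_big_nat => a /andP [a_gt0 lt_ah].
  rewrite mulr_sumr; apply: eq_big_nat => b /andP [b_gt0 lt_ba].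
  by rewrite pair_sum // lt_ba -ltnS.
rewrite exchange_big4; congr (_ * _); apply: eq_bigr => x _; apply: eq_bigr => y _.
have [/andP [py_gt0 _] px_in] : (1 <= nth 0 p y <= h)%N /\ (1 <= nth 0 p x <= h)%N.
  by rewrite !p_letters ?size_p.
by rewrite sum_letter_pairs.
Qed.

Lemma natr_sqr_ntotB (R : pzRingType) h ns :
  (ntot h ns)%:R ^+ 2 - \sum_(1 <= a < h.+1) (ns a)%:R ^+ 2 = 2 * (Ssum h ns)%:R :> R.
Proof.
rewrite -natrX sqr_ntot natrD natrM natr_sum.
by under eq_bigr do rewrite natrX; rewrite addrAC subrr add0r.
Qed.

Lemma sqr_ratio_pred_le2 (R : realFieldType) n : (4 <= n)%N ->
  (n%:R / (n.-1)%:R) ^+ 2 <= 2 :> R.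
Proof.
move=> n_ge4; have -> : n%:R = (n.-1)%:R + 1 :> R by rewrite natr1 prednK //; lia.
have m_ge3 : 3 <= (n.-1)%:R :> R by rewrite ler_nat; lia.
rewrite expr_div_n ler_pdivrMr ?exprn_gt0 //; first nra.
by apply: lt_le_trans m_ge3.
Qed.

Lemma ler_rescaled_bound (R : realFieldType) n S (K V : R) : (4 <= n)%N -> (0 < S)%N ->
  V <= n%:R * (K * n%:R ^+ 2) ^+ 2 ->
  ((n.-1)%:R * S%:R)^-1 ^+ 2 * V <= 8 * K ^+ 2 * n%:R ^+ 5 / (n%:R ^+ 2 * (2 * S%:R) ^+ 2).
Proof.
move=> n_ge4 S_gt0 le_V.
have n_gt0 : 0 < n%:R :> R by rewrite ltr0n; lia.
have m_gt0 : 0 < (n.-1)%:R :> R by rewrite ltr0n; lia.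
have S_gt0' : 0 < S%:R :> R by rewrite ltr0n.
apply: le_trans (ler_wpM2l (sqr_ge0 _) le_V) _.
have -> : ((n.-1)%:R * S%:R)^-1 ^+ 2 * (n%:R * (K * n%:R ^+ 2) ^+ 2) =
    K ^+ 2 * n%:R ^+ 3 / S%:R ^+ 2 * (n%:R / (n.-1)%:R) ^+ 2.
  by field; rewrite !gt_eqF.
have -> : 8 * K ^+ 2 * n%:R ^+ 5 / (n%:R ^+ 2 * (2 * S%:R) ^+ 2) =
    K ^+ 2 * n%:R ^+ 3 / S%:R ^+ 2 * 2.
  by field; rewrite !gt_eqF.
rewrite ler_wpM2l ?sqr_ratio_pred_le2 //.
by rewrite divr_ge0 ?sqr_ge0 // mulr_ge0 ?sqr_ge0 // exprn_ge0 // ltW.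
Qed.

Theorem lemma2p15 (R : realFieldType) :
  exists C : R, forall (h : nat) (ns : nat -> nat),
    (2 <= h)%N ->
    (forall a, (1 <= a <= h)%N -> (0 < ns a)%N) ->
    (4 <= ntot h ns)%N ->
    varOm h ns (condE R h ns) <=
      C * (ntot h ns)%:R ^+ 5 /
      ((ntot h ns)%:R ^+ 2 *
       ((ntot h ns)%:R ^+ 2 - \sum_(1 <= a < h.+1) (ns a)%:R ^+ 2) ^+ 2).
Proof.
exists (8 * 900 ^+ 2) => h ns h_ge2 ns_gt0 n_ge4.
set n := ntot h ns; set k := ((n.-1)%:R * (Ssum h ns)%:R)^-1 : R.
have var_condE : var (Omega h ns) (condE R h ns) = k ^+ 2 * var (Omega h ns) (total_change R).
  rewrite -varZ; apply: eq_in_var => p /mem_Omega [size_p p_letters].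
  by apply: condE_total_change; rewrite ?Ssum_gt0.
have var_total : var (Omega h ns) (total_change R) <= n%:R * (900 * n%:R ^+ 2) ^+ 2.
  rewrite /n -(size_base h ns); apply: var_permutations_le => t u v tO lt_u lt_v.
  by rewrite -(size_mem_permutations tO) total_change_swap ?(size_mem_permutations tO).
have -> : varOm h ns (condE R h ns) = var (Omega h ns) (condE R h ns) by [].
by rewrite var_condE natr_sqr_ntotB ler_rescaled_bound ?Ssum_gt0.
Qed.
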